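(* For every combinatorial auction with single-dimensional signals $s_i\in\{0,1,\dots,k-1\}$ ($k\ge2$ a power of $2$) and strong-SOS valuations, the mechanism $k$-SS is universally ex-post IC-IR and gives a $(2\log_2k+4)$-approximation to the optimal social welfare.
   Context: Setting: $n$ agents, $m$ items; agent $i$ has private signal $s_i$; value for bundle $T$ is $v_{iT}(\mathbf{s})\ge0$, public, weakly increasing in each coordinate, strictly in $s_i$. Strong-SOS: for every $j$, $\delta\ge0$, and profiles $\mathbf{s}'\le\mathbf{s}$ coordinate-wise, $v(\mathbf{s}'_{-j},s'_j+\delta)-v(\mathbf{s}'_{-j},s'_j)\ge v(\mathbf{s}_{-j},s_j+\delta)-v(\mathbf{s}_{-j},s_j)$; every $v_{iT}$ is strong-SOS. Allocations assign disjoint bundles. Random Bucket: choose $\ell$ uniformly in $\{1,\dots,\log_2k\}$; $N_{B_\ell}=\{i:s_i\ge2^{\ell-1}\}$; for $i\in N_{B_\ell}$, $\bar v_{iT}=v_{iT}(\mathbf{s}_{N_{\neg B_\ell}},\mathbf{2^{\ell-1}}_{N_{B_\ell}})$, else $0$; allocate a $\bar v$-welfare-maximizing allocation among $N_{B_\ell}$; agent receiving $\bar T_i$ pays $v_{i\bar T_i}(\mathbf{s}_{-i},2^{\ell-1}-1)$. Random Sampling: split agents uniformly at random into $A,B$; for $i\in B$, $\tilde v_{iT}=v_{iT}(\mathbf{s}_A,\mathbf{0}_B)$, for $i\in A$, $\tilde v_{iT}=0$; allocate a $\tilde v$-welfare-maximizing allocation among $B$; no payments. $k$-SS: run Random Bucket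 with probability $\frac{\log_2k}{\log_2k+2}$, otherwise Random Sampling. *)

From HB Require Import structures.
From mathcomp Require Import all_boot all_order all_algebra.
From Stdlib Require List.
Set Implicit Arguments. Unset Strict Implicit. Unset Printing Implicit Defensive.
Import Order.TTheory GRing.Theory Num.Theory.
Local Open Scope ring_scope.

Definition profile (I : finType) := {ffun I -> nat}.

Definition upd (I : finType) (s : profile I) (j : I) (x : nat) : profile I :=
  [ffun i => if i == j then x else s i].

Definition in_range (I : finType) (k : nat) (s : profile I) : bool :=
  [forall i, (s i < k)%N].

Definition valuations (I M : finType) (R : realFieldType) :=
  I -> {set M} -> profile I -> R.

(* Standing assumptions on the (public) valuations, for signals in {0..k-1}:
   normalized on the empty bundle, nonnegative, weakly increasing in every
   coordinate, strictly increasing in the own signal (for nonempty bundles),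
   and strong-SOS. *)
Definition valid_valuations (I M : finType) (R : realFieldType) (k : nat)
    (v : valuations I M R) : Prop :=
  [/\ (forall i s, v i set0 s = 0),
      (forall i T s, in_range k s -> 0 <= v i T s),
      (forall i T s j x y, in_range k s -> (x <= y)%N -> (y < k)%N ->
          v i T (upd s j x) <= v i T (upd s j y)),
      (forall i T s x y, T != set0 -> in_range k s -> (x < y)%N -> (y < k)%N ->
          v i T (upd s i x) < v i T (upd s i y))
    & (forall i T j d (s' s : profile I), in_range k s ->
          (forall l, (s' l <= s l)%N) -> (s j + d < k)%N ->
          v i T (upd s j (s j + d)) - v i T s
            <= v i T (upd s' j (s' j + d)) - v i T s')].

Definition allocation (I M : finType) := {ffun I -> {set M}}.

Definition feasible (I M : finType) (A : allocation I M) : Prop :=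
  forall i j, i != j -> [disjoint A i & A j].

Definition supported_on (I M : finType) (S : {set I}) (A : allocation I M) : Prop :=
  forall i, i \notin S -> A i = set0.

Definition welfare_of (I M : finType) (R : realFieldType)
    (val : I -> {set M} -> R) (A : allocation I M) : R :=
  \sum_i val i (A i).

Definition welfare (I M : finType) (R : realFieldType)
    (v : valuations I M R) (s : profile I) (A : allocation I M) : R :=
  \sum_i v i (A i) s.

Definition welfare_maximizer (I M : finType) (R : realFieldType)
    (sel : {set I} -> (I -> {set M} -> R) -> allocation I M) : Prop :=
  forall S val,
    [/\ feasible (sel S val), supported_on S (sel S val)
      & forall A, feasible A -> supported_on S A ->
          welfare_of val A <= welfare_of val (sel S val)].

Definition mechanism (I M : finType) (R : realFieldType) :=
  profile I -> allocation I M * (I -> R).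

Definition bucket_set (I : finType) (l : nat) (b : profile I) : {set I} :=
  [set i | (2 ^ l.-1 <= b i)%N].

Definition bucket_profile (I : finType) (l : nat) (b : profile I) : profile I :=
  [ffun i => if i \in bucket_set l b then (2 ^ l.-1)%N else b i].

Definition bucket_vals (I M : finType) (R : realFieldType) (v : valuations I M R)
    (l : nat) (b : profile I) : I -> {set M} -> R :=
  fun i T => if i \in bucket_set l b then v i T (bucket_profile l b) else 0.

Definition random_bucket (I M : finType) (R : realFieldType)
    (sel : {set I} -> (I -> {set M} -> R) -> allocation I M)
    (v : valuations I M R) (l : nat) : mechanism I M R :=
  fun b =>
    let A := sel (bucket_set l b) (bucket_vals v l b) in
    (A, fun i => v i (A i) (upd b i (2 ^ l.-1 - 1)%N)).

Definition sample_profile (I : finType) (Aset : {set I}) (b : profile I) : profile I :=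
  [ffun i => if i \in Aset then b i else 0%N].

Definition sample_vals (I M : finType) (R : realFieldType) (v : valuations I M R)
    (Aset : {set I}) (b : profile I) : I -> {set M} -> R :=
  fun i T => if i \in ~: Aset then v i T (sample_profile Aset b) else 0.

Definition random_sampling (I M : finType) (R : realFieldType)
    (sel : {set I} -> (I -> {set M} -> R) -> allocation I M)
    (v : valuations I M R) (Aset : {set I}) : mechanism I M R :=
  fun b => (sel (~: Aset) (sample_vals v Aset b), fun _ => 0).

(* ---------- k-SS with k = 2^K, as a finite distribution over
   deterministic mechanisms (probability, mechanism) ---------- *)
Definition kSS (I M : finType) (R : realFieldType)
    (sel : {set I} -> (I -> {set M} -> R) -> allocation I M)
    (v : valuations I M R) (K : nat) : seq (R * mechanism I M R) :=
  [seq (K%:R / (K + 2)%:R * K%:R^-1, random_bucket sel v l) | l <- iota 1 K]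
  ++ [seq (2%:R / (K + 2)%:R * (2 ^ #|I|)%:R^-1, random_sampling sel v Aset)
       | Aset <- enum [set: {set I}]].

Definition utility (I M : finType) (R : realFieldType) (v : valuations I M R)
    (mech : mechanism I M R) (s : profile I) (i : I) (b : profile I) : R :=
  v i ((mech b).1 i) s - (mech b).2 i.

Definition expost_IC_IR (I M : finType) (R : realFieldType) (k : nat)
    (v : valuations I M R) (mech : mechanism I M R) : Prop :=
  forall s, in_range k s -> forall i,
    0 <= utility v mech s i s /\
    (forall x, (x < k)%N -> utility v mech s i (upd s i x) <= utility v mech s i s).

Definition universally_expost_IC_IR (I M : finType) (R : realFieldType) (k : nat)
    (v : valuations I M R) (D : seq (R * mechanism I M R)) : Prop :=
  forall pm, List.In pm D -> expost_IC_IR k v pm.2.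

Definition expected_welfare (I M : finType) (R : realFieldType)
    (v : valuations I M R) (s : profile I) (D : seq (R * mechanism I M R)) : R :=
  \sum_(pm <- D) pm.1 * welfare v s (pm.2 s).1.

From HB Require Import structures.
From mathcomp Require Import all_boot all_order all_algebra.
From mathcomp Require Import zify ring lra.
From Stdlib Require List.
Set Implicit Arguments. Unset Strict Implicit. Unset Printing Implicit Defensive.
Import Order.TTheory GRing.Theory Num.Theory.
Local Open Scope ring_scope.

(* Random Bucket at level l is a threshold mechanism: agent i
   wins a bundle independent of her report as soon as it reaches 2^(l-1), and
   then pays her value at signal 2^(l-1) - 1; monotonicity gives IC and IR.
   In Random Sampling the sampled agents win nothing and the others cannot
   influence the allocation.

   Fix the true profile s and a feasible allocation A, and
   write its welfare as the sum of the marginals v_i(A_i, s) - v_i(A_i, s_{-i}, 0)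
   plus the values v_i(A_i, s_{-i}, 0).  Strong-SOS bounds the marginal of an
   agent whose signal lies in [2^l, 2^(l+1)) by twice her value in bucket l+1
   (marginal_le_twice), so the marginals are at most 2 * sum_l (welfare of
   Random Bucket at l) (bucket_part).  Strong-SOS from the zero profile makes
   valuations subadditive in signals, and pairing each split with its flip
   bounds the remaining values by 4 / 2^n * sum_S (welfare of Random Sampling
   with sample S) (sampling_part).  The weights of k-SS turn these two bounds
   into the factor 2K + 4. *)

Section Profiles.
Variable I : finType.

Definition addp (a c : profile I) : profile I := [ffun j => (a j + c j)%N].

Lemma upd_eq (s : profile I) j x : upd s j x j = x.
Proof. by rewrite ffunE eqxx. Qed.

Lemma upd_neq (s : profile I) j x l : l != j -> upd s j x l = s l.
Proof. by move=> h; rewrite ffunE (negbTE h). Qed.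

Lemma upd_upd (s : profile I) j x y : upd (upd s j x) j y = upd s j y.
Proof. by apply/ffunP=> l; rewrite !ffunE; case: (l == j). Qed.

Lemma upd_id (s : profile I) j : upd s j (s j) = s.
Proof. by apply/ffunP=> l; rewrite !ffunE; case: eqP => // ->. Qed.

Lemma upd_le (p s : profile I) i x y :
  (forall j, (p j <= s j)%N) -> (x <= y)%N -> forall j, (upd p i x j <= upd s i y j)%N.
Proof.
move=> hps hxy j; case: (eqVneq j i) => [->|hji]; first by rewrite !upd_eq.
by rewrite !upd_neq.
Qed.

Lemma in_rangeP k (s : profile I) : in_range k s <-> forall i, (s i < k)%N.
Proof. by split; [move/forallP | move=> h; apply/forallP]. Qed.

Lemma in_range_le k (p q : profile I) :
  (forall j, (p j <= q j)%N) -> in_range k q -> in_range k p.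
Proof.
move=> h /in_rangeP hq; apply/in_rangeP => j.
exact: leq_ltn_trans (h j) (hq j).
Qed.

Lemma in_range_upd k (s : profile I) j x :
  in_range k s -> (x < k)%N -> in_range k (upd s j x).
Proof.
move=> /in_rangeP h hx; apply/in_rangeP => l; rewrite ffunE.
by case: (l == j).
Qed.

Lemma addp0 (a c : profile I) : (forall j, c j = 0%N) -> addp a c = a.
Proof. by move=> h; apply/ffunP => j; rewrite ffunE h addn0. Qed.

Lemma addp_upd (a c : profile I) j :
  addp a c = upd (addp a (upd c j 0)) j (addp a (upd c j 0) j + c j).
Proof.
apply/ffunP => l; rewrite !ffunE; case: (l =P j) => [->|] //.
by rewrite eqxx addn0.
Qed.

Lemma addp_upd0_le (a c : profile I) j l : (addp a (upd c j 0) l <= addp a c l)%N.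
Proof. by rewrite !ffunE; case: (l =P j) => _; rewrite ?leq_add2l. Qed.

Lemma profile_ind (P : profile I -> Prop) :
  (forall c : profile I, (forall j, c j = 0%N) -> P c) ->
  (forall (c : profile I) j, c j != 0%N -> P (upd c j 0) -> P c) ->
  forall c, P c.
Proof.
move=> h0 hS.
suff main : forall n (c : profile I), #|[set j | c j != 0%N]| = n -> P c.
  by move=> c; exact: (main _ c erefl).
elim=> [|n IH] c hn.
  by apply: h0 => j; move/cards0_eq/setP/(_ j): hn; rewrite !inE => /negbFE/eqP.
have : (0 < #|[set j | c j != 0%N]|)%N by rewrite hn.
case/card_gt0P => j; rewrite inE => hj.
apply: (hS _ j hj); apply: IH.
have -> : [set l | upd c j 0 l != 0%N] = [set j | c j != 0%N] :\ j.
  by apply/setP => l; rewrite !inE ffunE; case: (l =P j) => [->|] //=.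
by move: hn; rewrite (cardsD1 j) inE hj => -[].
Qed.

End Profiles.

Section Valuations.
Variables (R : realFieldType) (I M : finType) (k : nat) (v : valuations I M R).
Hypothesis hv : valid_valuations k v.

Lemma v_set0 i s : v i set0 s = 0.
Proof. by case: hv. Qed.

Lemma v_ge0 i T s : in_range k s -> 0 <= v i T s.
Proof. by case: hv => _ h _ _ _; apply: h. Qed.

Lemma v_le_addp i T (a c : profile I) :
  in_range k (addp a c) -> v i T a <= v i T (addp a c).
Proof.
case: hv => _ _ hmono _ _.
elim/profile_ind: c a => [c hc|c j hcj IH] a hr; first by rewrite addp0.
have hr' : in_range k (addp a (upd c j 0)).
  by apply: in_range_le hr => l; apply: addp_upd0_le.
apply: le_trans (IH a hr') _.
rewrite [in X in _ <= X](addp_upd a c j).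
set s := addp a (upd c j 0).
rewrite -{1}(upd_id s j); apply: hmono => //; first by rewrite leq_addr.
by move/in_rangeP: hr => /(_ j); rewrite /s !ffunE eqxx addn0.
Qed.

Lemma mono_le i T (p q : profile I) :
  (forall j, (p j <= q j)%N) -> in_range k q -> v i T p <= v i T q.
Proof.
move=> hpq hq.
have e : q = addp p [ffun j => (q j - p j)%N].
  by apply/ffunP => j; rewrite !ffunE subnKC.
by rewrite e; apply: v_le_addp; rewrite -e.
Qed.

Lemma sos_add i T (c a b : profile I) :
  (forall j, (a j <= b j)%N) -> in_range k (addp b c) ->
  v i T (addp b c) - v i T b <= v i T (addp a c) - v i T a.
Proof.
case: hv => _ _ _ _ hsos.
elim/profile_ind: c a b => [c hc|c j hcj IH] a b hab hr.
  by rewrite !addp0 // !subrr.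
have hr' : in_range k (addp b (upd c j 0)).
  by apply: in_range_le hr => l; apply: addp_upd0_le.
have hlast : v i T (addp b c) - v i T (addp b (upd c j 0))
   <= v i T (addp a c) - v i T (addp a (upd c j 0)).
  rewrite (addp_upd b c j) (addp_upd a c j); apply: hsos => //.
    by move=> l; rewrite !ffunE leq_add2r.
  by move/in_rangeP: hr => /(_ j); rewrite !ffunE eqxx addn0.
have := IH a b hab hr'; lra.
Qed.

(* Strong-SOS from the zero profile makes valuations subadditive in signals. *)
Lemma v_subadditive i T (a c : profile I) :
  in_range k (addp a c) -> v i T (addp a c) <= v i T a + v i T c.
Proof.
move=> hr; set z : profile I := [ffun=> 0%N].
have hz : forall j, (z j <= a j)%N by move=> j; rewrite ffunE.
have := sos_add i T hz hr.
have -> : addp z c = c by apply/ffunP => j; rewrite !ffunE.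
have : 0 <= v i T z by apply: v_ge0; apply: in_range_le hr => j; rewrite ffunE.
lra.
Qed.

(* Halving lemma: if p <= s, p i = h and h <= s i <= 2h, then the marginal
   value of agent i for her whole signal is at most 2 v_i(T, p): each of the
   two halves [0, h] and [h, s i] of her signal is bounded by strong-SOS by a
   raise of her signal in p, hence by v_i(T, p). *)
Lemma marginal_le_twice i T (s p : profile I) h :
  in_range k s -> (forall j, (p j <= s j)%N) -> p i = h -> (h <= s i <= h.*2)%N ->
  v i T s - v i T (upd s i 0) <= 2 * v i T p.
Proof.
move=> hs hps hpi /andP [hl hu].
case: (hv) => _ _ _ _ hsos.
have hsk := proj1 (in_rangeP k s) hs i.
have hp : in_range k p by apply: in_range_le hs.
have hhk : (h < k)%N by apply: leq_ltn_trans hl hsk.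
have ep : upd p i h = p by rewrite -hpi upd_id.
set d := (s i - h)%N.
have e1 : (h + d = s i)%N by rewrite /d; lia.
have e2 : (h - d + d = h)%N by rewrite /d; lia.
have upper : v i T s - v i T (upd s i h) <= v i T p - v i T (upd p i (h - d)).
  have := hsos i T i d (upd p i (h - d)) (upd s i h).
  rewrite !upd_eq !upd_upd e1 e2 upd_id ep; apply; first exact: in_range_upd hs hhk.
  - exact: upd_le hps (leq_subr _ _).
  - by [].
have lower : v i T (upd s i h) - v i T (upd s i 0) <= v i T p - v i T (upd p i 0).
  have := hsos i T i h (upd p i 0) (upd s i 0).
  rewrite !upd_eq !upd_upd !add0n ep; apply; last by [].
  - by apply: in_range_upd; lia.
  - exact: upd_le hps (leq0n _).
have n1 : 0 <= v i T (upd p i (h - d)) by apply/v_ge0/in_range_upd => //; lia.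
have n2 : 0 <= v i T (upd p i 0) by apply/v_ge0/in_range_upd => //; lia.
lra.
Qed.

End Valuations.

Section Subsets.
Variables (I : finType) (j : I).

Definition flip_but (S : {set I}) : {set I} :=
  [set x | if x == j then x \in S else x \notin S].
Definition toggle (S : {set I}) : {set I} :=
  [set x | if x == j then x \notin S else x \in S].

Lemma flip_butK : involutive flip_but.
Proof.
by move=> S; apply/setP => x; rewrite !inE; case: (x == j); rewrite ?negbK.
Qed.

Lemma toggleK : involutive toggle.
Proof.
by move=> S; apply/setP => x; rewrite !inE; case: (x == j); rewrite ?negbK.
Qed.

Lemma sum_flip_but (V : nmodType) (F : {set I} -> V) :
  \sum_(S : {set I} | j \notin S) F (flip_but S) = \sum_(S : {set I} | j \notin S) F S.
Proof.
rewrite [RHS](reindex_inj (inv_inj flip_butK)) /=.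
by apply: eq_bigl => S; rewrite /flip_but inE eqxx.
Qed.

(* Every split either avoids j or is the toggle of one that does. *)
Lemma sum_toggle (V : nmodType) (F : {set I} -> V) :
  \sum_(S : {set I}) F S = \sum_(S : {set I} | j \notin S) (F S + F (toggle S)).
Proof.
rewrite big_split (bigID (fun S : {set I} => j \notin S)) /=; congr (_ + _).
rewrite (reindex_inj (inv_inj toggleK)) /=.
by apply: eq_bigl => S; rewrite /toggle inE eqxx negbK.
Qed.

End Subsets.

Section ReducedProfiles.
Variable I : finType.

Lemma bucket_profile_le l (s : profile I) j : (bucket_profile l s j <= s j)%N.
Proof. by rewrite ffunE; case: ifP => //; rewrite inE. Qed.

Lemma sample_profile_le (S : {set I}) (s : profile I) j : (sample_profile S s j <= s j)%N.
Proof. by rewrite ffunE; case: ifP. Qed.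

Lemma sample_profile_flip_but (s : profile I) j (S : {set I}) : j \notin S ->
  addp (sample_profile (flip_but j S) s) (sample_profile S s) = upd s j 0.
Proof.
move=> hjS; apply/ffunP => x; rewrite !ffunE !inE.
case: (x =P j) => [->|_]; first by rewrite (negbTE hjS).
by case: (x \in S); rewrite ?addn0.
Qed.

End ReducedProfiles.

Section Truthfulness.
Variables (R : realFieldType) (I M : finType) (k : nat) (v : valuations I M R).
Hypothesis hv : valid_valuations k v.
Variable sel : {set I} -> (I -> {set M} -> R) -> allocation I M.
Hypothesis hsel : welfare_maximizer sel.

Lemma sel_out (S : {set I}) rv i : i \notin S -> sel S rv i = set0.
Proof. by case: (hsel S rv) => _ h _; apply: h. Qed.

Lemma bucket_alloc_above l (s : profile I) i x y :
  (2 ^ l.-1 <= x)%N -> (2 ^ l.-1 <= y)%N ->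
  (random_bucket sel v l (upd s i x)).1 = (random_bucket sel v l (upd s i y)).1.
Proof.
move=> hx hy.
have eS : bucket_set l (upd s i x) = bucket_set l (upd s i y).
  apply/setP => j; rewrite !inE.
  by case: (eqVneq j i) => [->|hji]; rewrite ?upd_eq ?upd_neq // hx hy.
have eP : bucket_profile l (upd s i x) = bucket_profile l (upd s i y).
  apply/ffunP => j; rewrite [LHS]ffunE [RHS]ffunE eS; case: ifP => // hj.
  case: (eqVneq j i) => [e|hji]; last by rewrite !upd_neq.
  by move: hj; rewrite e inE upd_eq hy.
by rewrite /= /bucket_vals eS eP.
Qed.

Lemma bucket_alloc_below l (s : profile I) i x :
  (x < 2 ^ l.-1)%N -> (random_bucket sel v l (upd s i x)).1 i = set0.
Proof. by move=> hx; apply: sel_out; rewrite inE upd_eq -ltnNge. Qed.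

Definition bucket_bundle l (s : profile I) i : {set M} :=
  (random_bucket sel v l (upd s i (2 ^ l.-1))).1 i.

Lemma bucket_utility l (s : profile I) i x :
  utility v (random_bucket sel v l) s i (upd s i x) =
  if (2 ^ l.-1 <= x)%N then
    v i (bucket_bundle l s i) s - v i (bucket_bundle l s i) (upd s i (2 ^ l.-1 - 1))
  else 0.
Proof.
rewrite /utility /= upd_upd; case: ifP => hx.
  by have /= -> := bucket_alloc_above s i hx (leqnn (2 ^ l.-1)).
by rewrite bucket_alloc_below ?ltnNge ?hx // !(v_set0 hv) subrr.
Qed.

(* Random Bucket is ex-post IC and IR: the price is the value at the
   highest losing signal, so by monotonicity winning has nonnegative utility
   exactly when the true signal clears the threshold. *)
Lemma random_bucket_IC l :
  (2 ^ l.-1 <= k)%N -> expost_IC_IR k v (random_bucket sel v l).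
Proof.
move=> hthr s hs i.
have hsk := proj1 (in_rangeP k s) hs i.
have hr : in_range k (upd s i (2 ^ l.-1 - 1)) by apply: in_range_upd => //; lia.
have htruth := bucket_utility l s i (s i); rewrite upd_id in htruth.
set T := bucket_bundle l s i in htruth.
have gain : (2 ^ l.-1 <= s i)%N -> 0 <= v i T s - v i T (upd s i (2 ^ l.-1 - 1)).
  move=> h; rewrite subr_ge0 -{2}(upd_id s i); apply: (mono_le hv).
    by apply: upd_le => //; lia.
  by rewrite upd_id.
have loss : (s i < 2 ^ l.-1)%N -> v i T s - v i T (upd s i (2 ^ l.-1 - 1)) <= 0.
  move=> h; rewrite subr_le0 -{1}(upd_id s i); apply: (mono_le hv) => //.
  by apply: upd_le => //; lia.
rewrite htruth; split; first by case: leqP => // h; apply: gain.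
move=> x hx; rewrite bucket_utility -/T.
by case: leqP => h1; case: leqP => h2 //; [apply: loss | apply: gain].
Qed.

(* Random Sampling is ex-post IC and IR: agents of the sample win nothing and
   the reports of the others do not influence the allocation. *)
Lemma random_sampling_IC Aset : expost_IC_IR k v (random_sampling sel v Aset).
Proof.
move=> s hs i.
case: (boolP (i \in Aset)) => hi.
  have e : forall b, (random_sampling sel v Aset b).1 i = set0.
    by move=> b; apply: sel_out; rewrite inE hi.
  by split; last move=> x _; rewrite /utility !e !(v_set0 hv) /= subrr.
have e : forall x, sample_profile Aset (upd s i x) = sample_profile Aset s.
  move=> x; apply/ffunP => j; rewrite !ffunE.
  by case: (eqVneq j i) => [->|hji]; rewrite ?(negbTE hi).
rewrite /utility /= /sample_vals !subr0; split; first exact: (v_ge0 hv).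
by move=> x _; rewrite e subr0.
Qed.

End Truthfulness.

Section Approximation.
Variables (R : realFieldType) (I M : finType) (K : nat) (v : valuations I M R).
Hypothesis hv : valid_valuations (2 ^ K) v.
Variable sel : {set I} -> (I -> {set M} -> R) -> allocation I M.
Hypothesis hsel : welfare_maximizer sel.
Variable s : profile I.
Hypothesis hs : in_range (2 ^ K) s.
Variable A : allocation I M.
Hypothesis hA : feasible A.

Definition bucket_welfare l : R :=
  welfare v s (sel (bucket_set l s) (bucket_vals v l s)).
Definition sampling_welfare (S : {set I}) : R :=
  welfare v s (sel (~: S) (sample_vals v S s)).

Lemma welfare_split :
  welfare v s A = \sum_i (v i (A i) s - v i (A i) (upd s i 0))
                + \sum_i v i (A i) (upd s i 0).
Proof. by rewrite -big_split; apply: eq_bigr => i _ /=; rewrite subrK. Qed.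

Lemma welfare_ge_reduced (rv : I -> {set M} -> R) (B : allocation I M) :
  (forall j T, rv j T <= v j T s) -> welfare_of rv B <= welfare v s B.
Proof. by move=> h; apply: ler_sum => j _; apply: h. Qed.

Definition restrict (P : pred I) : allocation I M :=
  [ffun j => if P j then A j else set0].

Lemma restrict_feasible P : feasible (restrict P).
Proof.
move=> i j hij; rewrite !ffunE.
case: (P i); case: (P j); rewrite -?setI_eq0 ?setI0 ?set0I //.
by rewrite setI_eq0; apply: hA.
Qed.

Lemma sel_ge S rv (B : allocation I M) : feasible B -> supported_on S B ->
  welfare_of rv B <= welfare_of rv (sel S rv).
Proof. by case: (hsel S rv) => _ _ h; apply: h. Qed.

Lemma bucket_vals_ge0 l j T : 0 <= bucket_vals v l s j T.
Proof.
rewrite /bucket_vals; case: ifP => // _; apply: (v_ge0 hv).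
by apply: in_range_le hs => i; apply: bucket_profile_le.
Qed.

Lemma bucket_vals_le l j T : bucket_vals v l s j T <= v j T s.
Proof.
rewrite /bucket_vals; case: ifP => _; last exact: (v_ge0 hv).
by apply: (mono_le hv) => // i; apply: bucket_profile_le.
Qed.

Lemma sample_vals_le S j T : sample_vals v S s j T <= v j T s.
Proof.
rewrite /sample_vals; case: ifP => _; last exact: (v_ge0 hv).
by apply: (mono_le hv) => // x; apply: sample_profile_le.
Qed.

Definition in_level l : pred I := fun j => (2 ^ l.-1 <= s j < 2 ^ l)%N.

(* Each agent's marginal value is at most twice her reduced value in the
   bucket of her own signal (level 1 + log2 s_i), by marginal_le_twice. *)
Lemma marginal_le_buckets i :
  v i (A i) s - v i (A i) (upd s i 0)
    <= 2 * \sum_(l <- iota 1 K) bucket_vals v l s i (restrict (in_level l) i).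
Proof.
have sum_ge0 : forall r : seq nat,
    0 <= \sum_(l <- r) bucket_vals v l s i (restrict (in_level l) i).
  by move=> r; apply: sumr_ge0 => l _; apply: bucket_vals_ge0.
have [hsi|hsi] := posnP (s i).
  have -> : upd s i 0 = s by rewrite -[in LHS]hsi upd_id.
  by have := sum_ge0 (iota 1 K); lra.
have hsk := proj1 (in_rangeP _ s) hs i.
have /andP [hlo hhi] := trunc_log_bounds (isT : (1 < 2)%N) hsi.
set l := trunc_log 2 (s i) in hlo hhi.
have hlK : (l < K)%N.
  by rewrite -(@ltn_exp2l 2) //; apply: leq_ltn_trans hlo hsk.
have hin : i \in bucket_set l.+1 s by rewrite inE.
rewrite (bigD1_seq l.+1) ?iota_uniq ?mem_iota //=.
rewrite /bucket_vals hin ffunE /in_level /= hlo hhi /=.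
have hpi : bucket_profile l.+1 s i = (2 ^ l)%N by rewrite ffunE hin.
have hhalf : (2 ^ l <= s i <= (2 ^ l).*2)%N by rewrite hlo -mul2n -expnS ltnW.
have := marginal_le_twice hv (A i) hs (bucket_profile_le l.+1 s) hpi hhalf.
by have := sum_ge0 [seq l' <- iota 1 K | l' != l.+1]; rewrite big_filter; lra.
Qed.

Lemma bucket_part :
  \sum_i (v i (A i) s - v i (A i) (upd s i 0))
    <= 2 * \sum_(l <- iota 1 K) bucket_welfare l.
Proof.
apply: le_trans (ler_sum _ (fun i _ => marginal_le_buckets i)) _.
rewrite -mulr_sumr exchange_big /= ler_pM2l ?ltr0Sn //.
apply: ler_sum => l _.
apply: le_trans (welfare_ge_reduced _ (bucket_vals_le l)).
apply: sel_ge; first exact: restrict_feasible.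
move=> j; rewrite inE -ltnNge => hj; rewrite ffunE /in_level.
by rewrite ifF //; apply/negbTE; rewrite negb_and -ltnNge hj.
Qed.

(* Pairing each split S avoiding j with flip_but j S, subadditivity gives
   v_j(T, s_{-j}, 0) <= v_j(T, s_S) + v_j(T, s_{flip_but j S}); the splits
   avoiding j are half of all 2^n splits. *)
Lemma sampling_single j T :
  (2 ^ #|I|)%:R * v j T (upd s j 0)
    <= 4 * \sum_(S : {set I} | j \notin S) v j T (sample_profile S s).
Proof.
set g := v j T (upd s j 0).
have hr : in_range (2 ^ K) (upd s j 0) by apply: in_range_upd => //; rewrite expn_gt0.
have pair : forall S : {set I}, j \notin S ->
    g <= v j T (sample_profile S s) + v j T (sample_profile (flip_but j S) s).
  move=> S hS; rewrite addrC /g -(sample_profile_flip_but s hS).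
  by apply: (v_subadditive hv); rewrite sample_profile_flip_but.
have count : (2 ^ #|I|)%:R * g = 2 * \sum_(S : {set I} | j \notin S) g.
  rewrite mulr_natl -cardsT -(card_powerset [set: I]) powersetT cardsT -sumr_const.
  by rewrite (sum_toggle j) mulr_sumr; apply: eq_bigr => S _; rewrite mulr_natl mulr2n.
have half : \sum_(S : {set I} | j \notin S) g
    <= 2 * \sum_(S : {set I} | j \notin S) v j T (sample_profile S s).
  rewrite mulr_natl mulr2n -[X in _ + X](sum_flip_but j (fun S => v j T _)).
  by rewrite -big_split; apply: ler_sum => S hS; apply: pair.
by rewrite count; lra.
Qed.

Lemma sampling_part :
  (2 ^ #|I|)%:R * \sum_i v i (A i) (upd s i 0)
    <= 4 * \sum_(S : {set I}) sampling_welfare S.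
Proof.
have restricted : forall S : {set I},
    \sum_j (if j \notin S then v j (A j) (sample_profile S s) else 0)
      <= sampling_welfare S.
  move=> S; apply: le_trans (welfare_ge_reduced _ (sample_vals_le S)).
  have -> : \sum_j (if j \notin S then v j (A j) (sample_profile S s) else 0)
      = welfare_of (sample_vals v S s) (restrict (fun j => j \in ~: S)).
    apply: eq_bigr => j _; rewrite ffunE /sample_vals in_setC.
    by case: (j \in S) => //=; rewrite (v_set0 hv).
  apply: sel_ge; first exact: restrict_feasible.
  by move=> j hj; rewrite ffunE ifN.
rewrite mulr_sumr; apply: le_trans (ler_wpM2l _ (ler_sum _ (fun S _ => restricted S))) => //.
rewrite exchange_big /= mulr_sumr; apply: ler_sum => j _.
by rewrite -big_mkcond; apply: sampling_single.
Qed.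

Lemma expected_welfare_kSS :
  expected_welfare v s (kSS sel v K) =
    K%:R / (K + 2)%:R / K%:R * \sum_(l <- iota 1 K) bucket_welfare l
  + 2 / (K + 2)%:R / (2 ^ #|I|)%:R * \sum_(S : {set I}) sampling_welfare S.
Proof.
rewrite /expected_welfare /kSS big_cat !big_map /= big_enum /= -!mulr_sumr.
by congr (_ + _ * _); apply: eq_bigl => S; rewrite inE.
Qed.

End Approximation.

(* Weighting the two bounds as k-SS does: each of the K buckets is drawn with
   probability 1/(K+2), and each of the N samples with probability
   2/((K+2) N); multiplying by 2K+4 recovers both bounds. *)
Lemma combine_bounds (R : realFieldType) (K : nat) (N X G Bw Sw : R) :
  (0 < K)%N -> 0 < N -> X <= 2 * Bw -> N * G <= 4 * Sw ->
  X + G <= (2 * K + 4)%:R *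
             (K%:R / (K + 2)%:R / K%:R * Bw + 2 / (K + 2)%:R / N * Sw).
Proof.
move=> hK hN hX hG.
have hK2 : K%:R + 2 != 0 :> R by rewrite -natrD pnatr_eq0 addn2.
have hK0 : K%:R != 0 :> R by rewrite pnatr_eq0 -lt0n.
have e2K4 : (2 * K + 4)%:R = 2 * (K + 2)%:R :> R by rewrite -natrM; congr _%:R; lia.
have wbucket : (2 * K + 4)%:R * K%:R / (K + 2)%:R / K%:R = 2 :> R.
  by rewrite e2K4; field; rewrite hK0 hK2.
have wsample : (2 * K + 4)%:R * 2 / (K + 2)%:R / N = 4 / N.
  by rewrite e2K4; field; rewrite hK2 lt0r_neq0.
have hG' : G <= 4 / N * Sw by rewrite mulrAC ler_pdivlMr // mulrC.
by rewrite mulrDr !mulrA wbucket wsample; lra.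
Qed.

Theorem mainTheorem10 (R : realFieldType) (I M : finType) (K : nat)
    (hK : (0 < K)%N) (v : valuations I M R)
    (hv : valid_valuations (2 ^ K) v)
    (sel : {set I} -> (I -> {set M} -> R) -> allocation I M)
    (hsel : welfare_maximizer sel) :
  universally_expost_IC_IR (2 ^ K) v (kSS sel v K) /\
  (forall s : profile I, in_range (2 ^ K) s ->
     forall A : allocation I M, feasible A ->
       welfare v s A <= (2 * K + 4)%:R * expected_welfare v s (kSS sel v K)).
Proof.
split.
  move=> pm hpm; have [hin|hin] := List.in_app_or _ _ _ hpm;
    have [x [<- hx]] := proj1 (List.in_map_iff _ _ _) hin => /=.
    apply: (random_bucket_IC hv hsel).
    by move/List.in_seq: hx => hx; rewrite leq_exp2l //; lia.
  exact: (random_sampling_IC hv hsel).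
move=> s hs A hA.
rewrite welfare_split expected_welfare_kSS.
apply: combine_bounds => //; first by rewrite ltr0n expn_gt0.
  exact: (bucket_part hv hsel hs hA).
exact: (sampling_part hv hsel hs hA).
Qed.
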